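(* Let $R$ be a commutative ring which is free as an abelian group, with $\mathbb{Z}$-basis $V=\{v_k\}_{k\in I}$ (the rank may be infinite), let $n\ge 2$ and let $p$ be a prime. For $r\ge 1$ let $\Gamma_r=\Gamma(SL_n(R),p^r)=\ker\big(SL_n(R)\to SL_n(R\otimes_{\mathbb{Z}}\mathbb{Z}/p^r)\big)$. Let $\mathfrak{g}=\mathfrak{sl}_n(\mathbb{F}_p[V])$ and let $\mathfrak{L}$ be the kernel of the evaluation map $\mathfrak{g}\otimes_{\mathbb{F}_p}\mathbb{F}_p[t]\xrightarrow{t=0}\mathfrak{g}$, i.e. $\mathfrak{L}=\mathfrak{g}\otimes_{\mathbb{F}_p} t\mathbb{F}_p[t]$. Then $\mathfrak{L}\cong \mathrm{gr}_*(\Gamma(SL_n(R),p))$ as Lie algebras over $\mathbb{F}_p$.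
   Context: $\mathbb{F}_p[V]$ denotes $R\otimes_{\mathbb{Z}}\mathbb{Z}/p=R/pR$, a commutative $\mathbb{F}_p$-algebra whose underlying vector space is free on (the image of) $V$. $\mathfrak{sl}_n(\mathbb{F}_p[V])$ is the Lie algebra of traceless $n\times n$ matrices over $R/pR$ with bracket $[A,B]=AB-BA$. $\mathfrak{g}\otimes_{\mathbb{F}_p}\mathbb{F}_p[t]$ has bracket $[A\otimes t^i,B\otimes t^j]=(AB-BA)\otimes t^{i+j}$. The filtration $\cdots\subseteq\Gamma_{r+1}\subseteq\Gamma_r\subseteq\cdots\subseteq\Gamma_1$ satisfies $[\Gamma_r,\Gamma_s]\subseteq\Gamma_{r+s}$ (group commutator $[g,h]=g^{-1}h^{-1}gh$), and each $\Gamma_r/\Gamma_{r+1}$ is an elementary abelian $p$-group, regarded as an $\mathbb{F}_p$-vector space. $\mathrm{gr}_*(\Gamma(SL_n(R),p))=\bigoplus_{r\ge1}\Gamma_r/\Gamma_{r+1}$, with Lie bracket obtained by extending bilinearly the maps $\Gamma_r/\Gamma_{r+1}\times\Gamma_s/\Gamma_{s+1}\to\Gamma_{r+s}/\Gamma_{r+s+1}$ induced by the group commutator. *)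

From HB Require Import structures.
From mathcomp Require Import all_boot all_order all_algebra.
Set Implicit Arguments.
Unset Strict Implicit.
Unset Printing Implicit Defensive.
Import GRing.Theory.
Local Open Scope ring_scope.

Definition congr_mod (R : comPzRingType) (m x y : R) : Prop :=
  exists z : R, x - y = m * z.

Definition Z_basis (R : comPzRingType) (I : eqType) (v : I -> R) : Prop :=
  (forall (s : seq I) (c : I -> int), uniq s ->
      \sum_(i <- s) (v i *~ c i) = 0 -> forall i, i \in s -> c i = 0)
  /\ (forall x : R, exists (s : seq I) (c : I -> int),
        x = \sum_(i <- s) (v i *~ c i)).

Definition in_Gamma (R : comPzRingType) (n p r : nat) (A : 'M[R]_n) : Prop :=
  \det A = 1 /\
  forall i j, congr_mod (p ^ r)%:R (A i j) ((1%:M : 'M[R]_n) i j).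

(* Group inverse in SL_n(R): for det A = 1 the adjugate is the inverse. *)
Definition sl_inv (R : comPzRingType) (n : nat) (A : 'M[R]_n) : 'M[R]_n :=
  \adj A.

Definition gcomm (R : comPzRingType) (n : nat) (g h : 'M[R]_n) : 'M[R]_n :=
  sl_inv g *m sl_inv h *m g *m h.

(* ---------- gr_*(Gamma(SL_n(R),p)) = (+)_{r>=1} Gamma_r/Gamma_{r+1} ----------
   An element is represented by a family a : nat -> 'M[R]_n with a r in Gamma_r
   for every r >= 1 (the class of a r in Gamma_r/Gamma_{r+1} is the degree-r
   component), almost all components trivial (a r in Gamma_{r+1});
   index 0 is unused. *)
Definition gr_elt (R : comPzRingType) (n p : nat) (a : nat -> 'M[R]_n) : Prop :=
  (forall r, (0 < r)%N -> in_Gamma p r (a r)) /\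
  exists N, forall r, (N <= r)%N -> in_Gamma p r.+1 (a r).

Definition gr_eq (R : comPzRingType) (n p : nat) (a b : nat -> 'M[R]_n) : Prop :=
  forall r, (0 < r)%N -> in_Gamma p r.+1 (sl_inv (a r) *m b r).

Definition gr_add (R : comPzRingType) (n : nat) (a b : nat -> 'M[R]_n) :
  nat -> 'M[R]_n := fun r => a r *m b r.

(* Lie bracket in gr_*: bilinear extension of the maps induced by the group
   commutator Gamma_i/Gamma_{i+1} x Gamma_j/Gamma_{j+1} -> Gamma_{i+j}/Gamma_{i+j+1};
   degree-r component = sum_{i+j=r, i,j>=1} [a_i, b_j]. *)
Definition gr_bracket (R : comPzRingType) (n : nat) (a b : nat -> 'M[R]_n) :
  nat -> 'M[R]_n :=
  fun r => \big[mulmx/1%:M]_(1 <= i < r) gcomm (a i) (b (r - i)%N).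

(* ---------- L = sl_n(F_p[V]) (x) t F_p[t], with F_p[V] = R / pR ----------
   An element is represented by a family X : nat -> 'M[R]_n, X r being a lift
   to R of the coefficient of t^r (a matrix over R/pR); the coefficients are
   traceless over R/pR, the t^0 coefficient vanishes, almost all vanish. *)
Definition mx_congr_p (R : comPzRingType) (n p : nat) (X Y : 'M[R]_n) : Prop :=
  forall i j, congr_mod p%:R (X i j) (Y i j).

Definition L_elt (R : comPzRingType) (n p : nat) (X : nat -> 'M[R]_n) : Prop :=
  mx_congr_p p (X 0%N) 0 /\
  (forall r, congr_mod p%:R (\tr (X r)) 0) /\
  exists N, forall r, (N <= r)%N -> mx_congr_p p (X r) 0.

Definition L_eq (R : comPzRingType) (n p : nat) (X Y : nat -> 'M[R]_n) : Prop :=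
  forall r, mx_congr_p p (X r) (Y r).

Definition L_add (R : comPzRingType) (n : nat) (X Y : nat -> 'M[R]_n) :
  nat -> 'M[R]_n := fun r => X r + Y r.

(* [A (x) t^i, B (x) t^j] = (AB - BA) (x) t^(i+j) *)
Definition L_bracket (R : comPzRingType) (n : nat) (X Y : nat -> 'M[R]_n) :
  nat -> 'M[R]_n :=
  fun r => \sum_(0 <= i < r.+1) (X i *m Y (r - i)%N - Y (r - i)%N *m X i).

(* phi (acting on representatives) induces an isomorphism of Lie algebras over
   F_p from L onto gr_*(Gamma(SL_n(R),p)): well defined, additive (hence
   F_p-linear), compatible with brackets, injective and surjective. *)
Definition Lie_iso_L_gr (R : comPzRingType) (n p : nat)
    (phi : (nat -> 'M[R]_n) -> (nat -> 'M[R]_n)) : Prop :=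
  (forall X, L_elt p X -> gr_elt p (phi X)) /\
  (forall X Y, L_elt p X -> L_elt p Y -> L_eq p X Y -> gr_eq p (phi X) (phi Y)) /\
  (forall X Y, L_elt p X -> L_elt p Y ->
     gr_eq p (phi (L_add X Y)) (gr_add (phi X) (phi Y))) /\
  (forall X Y, L_elt p X -> L_elt p Y ->
     gr_eq p (phi (L_bracket X Y)) (gr_bracket (phi X) (phi Y))) /\
  (forall X Y, L_elt p X -> L_elt p Y -> gr_eq p (phi X) (phi Y) -> L_eq p X Y) /\
  (forall a, gr_elt p a -> exists X, L_elt p X /\ gr_eq p (phi X) a).

From HB Require Import structures.
From mathcomp Require Import all_boot all_order all_algebra.
From mathcomp Require Import fingroup perm ring.
From Stdlib Require Import ClassicalEpsilon.

(* The isomorphism sends X t^r, with X traceless modulo p, to the class in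
   Gamma_r / Gamma_(r+1) of any A in SL_n(R) with A = 1 + p^r X modulo p^(r+1).
   Since (1 + p^r X)(1 + p^r Y) = 1 + p^r (X + Y) modulo p^(r+1) for r >= 1,
   such an A exists for every traceless X as soon as it does for the e_ij
   (transvections) and for the e_jj - e_ii (conjugates of transvections);
   conversely det (1 + p^r X) = 1 + p^r tr X modulo p^(2r) forces tr X = 0
   modulo p.  The commutator of 1 + p^i X and 1 + p^j Y is 1 + p^(i+j) [X, Y]
   modulo p^(i+j+1), which gives compatibility with the brackets.
   Injectivity and the trace condition cancel powers of p, which is legitimate
   because R is free as an abelian group. *)

Set Implicit Arguments.
Unset Strict Implicit.
Unset Printing Implicit Defensive.

Import GRing.Theory.
Local Open Scope ring_scope.

Lemma Z_basis_natr_lreg (R : comPzRingType) (I : eqType) (v : I -> R) (m : nat) :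
  Z_basis v -> (0 < m)%N -> GRing.lreg (m%:R : R).
Proof.
move=> [indep span] m_gt0.
suff m_torsion_free : forall x : R, m%:R * x = 0 -> x = 0.
  move=> x y mxy; apply/eqP; rewrite -subr_eq0; apply/eqP/m_torsion_free.
  by rewrite mulrBr mxy subrr.
move=> x; have [s [c ->]] := span x.
(* regroup repeated indices so that independence applies to [undup s] *)
pose c' i := c i * (count_mem i s)%:Z.
have -> : \sum_(i <- s) v i *~ c i = \sum_(i <- undup s) v i *~ c' i.
  rewrite -(big_undup_iterop_count _ _ predT); apply: eq_bigr => i _.
  rewrite Monoid.iteropE /c' mulrzA -pmulrn; elim: (count_mem i s) => //= k ->.
  by rewrite mulrS.
move=> msum0; rewrite big_seq big1 // => i i_s.
have mc'_sum0 : \sum_(i <- undup s) v i *~ (c' i *~ m) = 0.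
  rewrite -[RHS]msum0 mulr_sumr; apply: eq_bigr => j _.
  by rewrite mulrzz mulrzA -pmulrn mulr_natl.
have /eqP := indep _ _ (undup_uniq s) mc'_sum0 i i_s.
rewrite mulrzz mulf_eq0 => /orP[/eqP -> | ]; first exact: mulr0z.
by rewrite eqz_nat eqn0Ngt m_gt0.
Qed.

Section MatrixCongruence.
Variables (R : comPzRingType) (n : nat).
Implicit Types (m k : R) (A B C D M : 'M[R]_n).

Definition congr_mx m A B := exists C, A - B = m *: C.

Lemma congr_mxP m A B : (forall i j, congr_mod m (A i j) (B i j)) <-> congr_mx m A B.
Proof.
split=> [congrAB | [C defC] i j]; last first.
  by exists (C i j); have /matrixP/(_ i j) := defC; rewrite !mxE.
have exC i j : exists z, A i j - B i j == m * z.
  by have [z defz] := congrAB i j; exists z; apply/eqP.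
exists (\matrix_(i, j) xchoose (exC i j)); apply/matrixP => i j.
by rewrite !mxE; apply/eqP/(xchooseP (exC i j)).
Qed.

Lemma congr_mx_refl m A : congr_mx m A A.
Proof. by exists 0; rewrite subrr scaler0. Qed.

Lemma congr_mx_sym m A B : congr_mx m A B -> congr_mx m B A.
Proof. by case=> C defC; exists (- C); rewrite scalerN -defC opprB. Qed.

Lemma congr_mx_trans m A B D : congr_mx m A B -> congr_mx m B D -> congr_mx m A D.
Proof.
case=> C defC [E defE]; exists (C + E).
by rewrite scalerDr -defC -defE addrA subrK.
Qed.

Lemma congr_mxD m A B A' B' :
  congr_mx m A B -> congr_mx m A' B' -> congr_mx m (A + A') (B + B').
Proof.
case=> C defC [E defE]; exists (C + E).
by rewrite scalerDr -defC -defE opprD addrACA.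
Qed.

Lemma congr_mxN m A B : congr_mx m A B -> congr_mx m (- A) (- B).
Proof. by case=> C defC; exists (- C); rewrite scalerN -defC opprB opprK addrC. Qed.

Lemma congr_mxMl m M A B : congr_mx m A B -> congr_mx m (M *m A) (M *m B).
Proof. by case=> C defC; exists (M *m C); rewrite -mulmxBr defC scalemxAr. Qed.

Lemma congr_mxMr m M A B : congr_mx m A B -> congr_mx m (A *m M) (B *m M).
Proof. by case=> C defC; exists (C *m M); rewrite -mulmxBl defC scalemxAl. Qed.

Lemma congr_mxM m A B A' B' :
  congr_mx m A B -> congr_mx m A' B' -> congr_mx m (A *m A') (B *m B').
Proof. by move=> /(congr_mxMr A') AB /(congr_mxMl B); apply: congr_mx_trans. Qed.

Lemma congr_mxZ m k A B : congr_mx m A B -> congr_mx (k * m) (k *: A) (k *: B).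
Proof. by case=> C defC; exists C; rewrite -scalerBr defC scalerA. Qed.

Lemma congr_mx_dvd m k A B : congr_mx (m * k) A B -> congr_mx m A B.
Proof. by case=> C defC; exists (k *: C); rewrite defC scalerA. Qed.

Lemma congr_mx_scale0 m C : congr_mx m (m *: C) 0.
Proof. by exists C; rewrite subr0. Qed.

Lemma congr_mx_addr0 m A B C : congr_mx m C 0 -> congr_mx m A B -> congr_mx m (A + C) B.
Proof. by move=> C0 AB; rewrite -[B]addr0; apply: congr_mxD. Qed.

Lemma congr_mx_commutator0 m A B : congr_mx m A 0 ->
  congr_mx m (A *m B - B *m A) 0 /\ congr_mx m (B *m A - A *m B) 0.
Proof.
move=> A0; have := congr_mxMr B A0; have := congr_mxMl B A0.
rewrite mul0mx mulmx0 => BA0 AB0; rewrite -(subrr (0 : 'M[R]_n)).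
by split; apply: congr_mxD => //; apply: congr_mxN.
Qed.

Lemma congr_mx_addKl m A B C : congr_mx m (C + A) (C + B) -> congr_mx m A B.
Proof. by case=> D defD; exists D; rewrite -defD opprD addrACA subrr add0r. Qed.

End MatrixCongruence.

Lemma prod_1addM (R : comPzRingType) (I : Type) (s : seq I) (a : R) (f : I -> R) :
  exists z, \prod_(i <- s) (1 + a * f i) = 1 + a * \sum_(i <- s) f i + a * a * z.
Proof.
elim: s => [|k s [z IH]]; first by exists 0; rewrite !big_nil; ring.
by exists (f k * \sum_(i <- s) f i + z + a * f k * z); rewrite !big_cons IH; ring.
Qed.

Section UnitriangularCalculus.
Variables (R : comPzRingType) (n : nat).
Implicit Types (A B C X Y : 'M[R]_n) (a b : R).

Lemma mulmx_1addZ a b X Y :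
  (1%:M + a *: X) *m (1%:M + b *: Y) =
  1%:M + a *: X + b *: Y + (a * b) *: (X *m Y).
Proof.
rewrite mulmxDl !mulmxDr !mul1mx !mulmx1 -scalemxAl -scalemxAr scalerA.
by rewrite !addrA (addrAC 1%:M).
Qed.

Lemma mulmx_1addZC a b X Y :
  (1%:M + a *: X) *m (1%:M + b *: Y) =
  (1%:M + b *: Y) *m (1%:M + a *: X) + (a * b) *: (X *m Y - Y *m X).
Proof.
rewrite !mulmx_1addZ scalerBr (mulrC b a) [RHS]addrAC -[RHS]addrA subrK.
by rewrite -!addrA (addrCA (a *: X)).
Qed.

Lemma adj_mulmx_det1 A : \det A = 1 -> \adj A *m A = 1%:M /\ A *m \adj A = 1%:M.
Proof. by move=> detA; rewrite mul_adj_mx mul_mx_adj detA. Qed.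

Lemma det_adj_det1 A : \det A = 1 -> \det (\adj A) = 1.
Proof.
move=> detA; have /(congr1 determinant) := (adj_mulmx_det1 detA).1.
by rewrite det_mulmx detA mulr1 det1.
Qed.

Lemma det_gcomm A B : \det A = 1 -> \det B = 1 -> \det (gcomm A B) = 1.
Proof. by move=> dA dB; rewrite /gcomm /sl_inv !det_mulmx !det_adj_det1 // dA dB !mulr1. Qed.

Lemma adj_congr1 m A : \det A = 1 -> congr_mx m A 1%:M -> congr_mx m (\adj A) 1%:M.
Proof.
move=> detA /(congr_mxMl (\adj A)); rewrite (adj_mulmx_det1 detA).1 mulmx1.
exact: congr_mx_sym.
Qed.

Lemma det_transvection (i j : 'I_n) (c : R) : i != j -> \det (1%:M + c *: delta_mx i j) = 1.
Proof.
have det_lower (k l : 'I_n) : (l < k)%N -> \det (1%:M + c *: delta_mx k l) = 1.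
  move=> lt_lk; rewrite det_trig; last first.
    apply/is_trig_mxP => a b lt_ab.
    have /negbTE neq_ab : a != b by apply: contraTneq lt_ab => ->; rewrite ltnn.
    rewrite !mxE neq_ab add0r.
    case: (a =P k) => [ak | _]; last by rewrite mulr0.
    case: (b =P l) => [bl | _]; last by rewrite mulr0.
    by move: lt_ab; rewrite ak bl ltnNge ltnW.
  rewrite big1 // => a _; rewrite !mxE eqxx.
  case: (a =P k) => [ak | _]; last by rewrite mulr0 addr0.
  case: (a =P l) => [al | _]; last by rewrite mulr0 addr0.
  by rewrite -ak -al ltnn in lt_lk.
rewrite neq_ltn => /orP[lt_ij | lt_ji]; last exact: det_lower.
by rewrite -det_tr linearD /= linearZ /= trmx_delta tr_scalar_mx det_lower.
Qed.

(* Off the identity permutation every term of the Leibniz expansion has at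
   least two off-diagonal factors, each divisible by [a]. *)
Lemma det_1addZ a C : exists z, \det (1%:M + a *: C) = 1 + a * \tr C + a * a * z.
Proof.
set M := 1%:M + a *: C.
have [z prod_diag] := prod_1addM (index_enum 'I_n) a (fun i => C i i).
have [w offdiag] : exists w,
    \sum_(s : 'S_n | s != 1%g) (-1) ^+ s * \prod_i M i (s i) = a * a * w.
  pose dvd_aa x := exists w, x = a * a * w.
  apply: (big_ind dvd_aa); first by exists 0; rewrite mulr0.
    by move=> x y [w1 ->] [w2 ->]; exists (w1 + w2); rewrite mulrDr.
  move=> s s_neq1; have [i si_neq_i] : exists i, s i != i.
    apply/existsP; apply: contraR s_neq1 => /existsPn fix_s; apply/eqP/permP => k.
    by rewrite perm1; apply/eqP; rewrite -[_ == _]negbK fix_s.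
  set j := s i; have sj_neq_j : s j != j by apply: contra si_neq_i => /eqP/perm_inj/eqP.
  have off k : s k != k -> M k (s k) = a * C k (s k).
    by move=> sk; rewrite !mxE eq_sym (negbTE sk) add0r.
  have neq_ij : i != j by rewrite eq_sym.
  rewrite (bigD1 i) //= (bigD1 j) //= off // off //.
  set P := \prod_(_ < _ | _) _; set e := (-1) ^+ s; set u := C i j; set u' := C j (s j).
  by exists (e * u * u' * P); ring.
exists (z + w); rewrite /determinant (bigD1 1%g) //= offdiag odd_perm1 expr0 mul1r.
have -> : \prod_i M i ((1%g : 'S_n) i) = \prod_(i <- index_enum 'I_n) (1 + a * C i i).
  by apply: eq_bigr => i _; rewrite perm1 !mxE eqxx.
by rewrite prod_diag /mxtrace; ring.
Qed.

End UnitriangularCalculus.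

Section Lifts.
Variables (R : comPzRingType) (n p : nat).
Implicit Types (A B X Y : 'M[R]_n).

Definition ppow (k : nat) : R := (p ^ k)%:R.

Lemma ppowS k : ppow k.+1 = ppow k * p%:R.
Proof. by rewrite /ppow expnSr natrM. Qed.

Lemma ppowD i j : ppow (i + j) = ppow i * ppow j.
Proof. by rewrite /ppow expnD natrM. Qed.

Lemma ppow_pred r : (0 < r)%N -> ppow r = p%:R * ppow r.-1.
Proof. by move=> r_gt0; rewrite -{1}(prednK r_gt0) -add1n ppowD /ppow expn1. Qed.

(* [A] represents the class of [X t^r]. *)
Definition lifts r A X := congr_mx (ppow r.+1) A (1%:M + ppow r *: X).

Definition sl_lift r A X := \det A = 1 /\ lifts r A X.

Lemma lifts_1 r : lifts r 1%:M 0.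
Proof. by rewrite /lifts scaler0 addr0; apply: congr_mx_refl. Qed.

Lemma lifts_congr r A X X' : congr_mx p%:R X X' -> lifts r A X -> lifts r A X'.
Proof.
move=> XX' /congr_mx_trans; apply; apply: congr_mxD; first exact: congr_mx_refl.
by rewrite ppowS; apply: congr_mxZ.
Qed.

Lemma lifts_mul r A B X Y : (0 < r)%N ->
  lifts r A X -> lifts r B Y -> lifts r (A *m B) (X + Y).
Proof.
move=> r_gt0 liftA liftB; apply: congr_mx_trans (congr_mxM liftA liftB) _.
rewrite mulmx_1addZ scalerDr addrA; apply: congr_mx_addr0; last exact: congr_mx_refl.
have -> : ppow r * ppow r = ppow r.+1 * ppow r.-1.
  by rewrite -!ppowD addSn -addnS prednK.
by rewrite -scalerA; apply: congr_mx_scale0.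
Qed.

Lemma lifts_exact r A X : lifts r A X ->
  exists X', A = 1%:M + ppow r *: X' /\ congr_mx p%:R X' X.
Proof.
case=> C defC; exists (X + p%:R *: C); split; last by exists C; rewrite addrC addKr.
by rewrite scalerDr scalerA -ppowS -defC addrA addrC subrK.
Qed.

Lemma lifts_congr1 r A X : lifts r A X -> congr_mx (ppow r) A 1%:M.
Proof.
move=> /lifts_exact[X' [-> _]]; rewrite -{2}[1%:M]addr0.
by apply: congr_mxD; [apply: congr_mx_refl | apply: congr_mx_scale0].
Qed.

Lemma lifts_congr1_p r A X : (0 < r)%N -> lifts r A X -> congr_mx p%:R A 1%:M.
Proof. by move=> r_gt0 /lifts_congr1; rewrite ppow_pred //; apply: congr_mx_dvd. Qed.

Lemma lifts_congr0 r A X : congr_mx p%:R X 0 -> lifts r A X ->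
  congr_mx (ppow r.+1) A 1%:M.
Proof. by move=> X0 /(lifts_congr X0); rewrite /lifts scaler0 addr0. Qed.

(* The commutator of 1 + p^i X' and 1 + p^j Y' is
   1 + p^(i+j) A^-1 B^-1 [X', Y'], and A^-1 B^-1 = 1 modulo p. *)
Lemma lifts_gcomm i j A B X Y : (0 < i)%N -> (0 < j)%N ->
  sl_lift i A X -> sl_lift j B Y -> lifts (i + j) (gcomm A B) (X *m Y - Y *m X).
Proof.
move=> i_gt0 j_gt0 [detA liftA] [detB liftB].
have adjA1 := adj_congr1 detA (lifts_congr1_p i_gt0 liftA).
have adjB1 := adj_congr1 detB (lifts_congr1_p j_gt0 liftB).
have [X' [defA XX']] := lifts_exact liftA; have [Y' [defB YY']] := lifts_exact liftB.
apply: (@lifts_congr _ _ (X' *m Y' - Y' *m X')).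
  by apply: congr_mxD; [|apply: congr_mxN]; apply: congr_mxM.
have commAB : A *m B = B *m A + (ppow i * ppow j) *: (X' *m Y' - Y' *m X').
  by rewrite defA defB mulmx_1addZC.
have -> : gcomm A B =
    1%:M + (ppow i * ppow j) *: ((\adj A *m \adj B) *m (X' *m Y' - Y' *m X')).
  rewrite /gcomm /sl_inv -!mulmxA commAB !mulmxDr -!scalemxAr !mulmxA.
  congr (_ + _); last by rewrite mulmxDr !mulmxA.
  by rewrite -(mulmxA (\adj A)) (adj_mulmx_det1 detB).1 mulmx1 (adj_mulmx_det1 detA).1.
rewrite /lifts -ppowD; apply: congr_mxD; first exact: congr_mx_refl.
rewrite ppowS; apply: congr_mxZ; rewrite -[X in congr_mx _ _ X]mul1mx.
by apply: congr_mxMr; rewrite -(mul1mx 1%:M); apply: congr_mxM.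
Qed.

Lemma sl_lift_gcomm i j A B X Y : (0 < i)%N -> (0 < j)%N ->
  sl_lift i A X -> sl_lift j B Y -> sl_lift (i + j) (gcomm A B) (X *m Y - Y *m X).
Proof.
move=> i_gt0 j_gt0 liftA liftB; split; last exact: lifts_gcomm.
by apply: det_gcomm; [case: liftA | case: liftB].
Qed.

Lemma sl_lift_mul r A B X Y : (0 < r)%N ->
  sl_lift r A X -> sl_lift r B Y -> sl_lift r (A *m B) (X + Y).
Proof.
move=> r_gt0 [detA liftA] [detB liftB].
by split; [rewrite det_mulmx detA detB mulr1 | apply: lifts_mul].
Qed.

Lemma in_Gamma_adjmx r A B : \det A = 1 -> \det B = 1 ->
  in_Gamma p r (\adj A *m B) <-> congr_mx (ppow r) A B.
Proof.
move=> detA detB; split.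
  case=> _ /congr_mxP /(congr_mxMl A); rewrite mulmxA (adj_mulmx_det1 detA).2.
  by rewrite mul1mx mulmx1 => /congr_mx_sym.
move=> /congr_mx_sym /(congr_mxMl (\adj A)); rewrite (adj_mulmx_det1 detA).1.
by split; [rewrite det_mulmx det_adj_det1 // detB mulr1 | apply/congr_mxP].
Qed.

Lemma sl_lift_in_Gamma r A B X : sl_lift r A X -> sl_lift r B X ->
  in_Gamma p r.+1 (sl_inv A *m B).
Proof.
move=> [detA liftA] [detB liftB]; apply/in_Gamma_adjmx => //.
exact: congr_mx_trans liftA (congr_mx_sym liftB).
Qed.

End Lifts.

Section Liftable.
Variables (R : comPzRingType) (n p r : nat).
Hypothesis r_gt0 : (0 < r)%N.
Implicit Types (S T X Y : 'M[R]_n).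

Definition liftable X := exists A, sl_lift p r A X.

Lemma liftable0 : liftable 0.
Proof. by exists 1%:M; split; [apply: det1 | apply: lifts_1]. Qed.

Lemma liftableD X Y : liftable X -> liftable Y -> liftable (X + Y).
Proof. by move=> [A liftA] [B liftB]; exists (A *m B); apply: sl_lift_mul. Qed.

Lemma liftable_congr X Y : congr_mx p%:R X Y -> liftable X -> liftable Y.
Proof. by move=> XY [A [detA liftA]]; exists A; split => //; apply: lifts_congr liftA. Qed.

Lemma liftable_delta (i j : 'I_n) (c : R) : i != j -> liftable (c *: delta_mx i j).
Proof.
move=> neq_ij; exists (1%:M + ppow R p r *: (c *: delta_mx i j)).
by split; [rewrite scalerA det_transvection | apply: congr_mx_refl].
Qed.

Lemma liftable_conj X T S : \det T = 1 -> T *m S = 1%:M ->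
  liftable X -> liftable (T *m X *m S).
Proof.
move=> detT TS [A [detA liftA]]; exists (T *m A *m S); split.
  have /(congr1 determinant) := TS.
  by rewrite !det_mulmx detT detA det1 !mul1r => ->.
apply: congr_mx_trans (congr_mxMr _ (congr_mxMl _ liftA)) _.
rewrite mulmxDr mulmxDl mulmx1 TS -scalemxAr -scalemxAl; exact: congr_mx_refl.
Qed.

(* e_jj - e_ii is the conjugate of e_ij by 1 + e_ji, up to off-diagonal terms. *)
Lemma liftable_diag (i j : 'I_n) (c : R) : i != j ->
  liftable (c *: (delta_mx j j - delta_mx i i)).
Proof.
move=> neq_ij; have neq_ji : j != i by rewrite eq_sym.
have inv_ji : (1%:M + (1 : R) *: delta_mx j i) *m (1%:M + (-1 : R) *: delta_mx j i) = 1%:M.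
  by rewrite mulmx_1addZ mul_delta_mx_0 // scaler0 addr0 scaleN1r scale1r addrK.
have := liftable_conj (det_transvection 1 neq_ji) inv_ji (liftable_delta c neq_ij).
rewrite scale1r scaleN1r mulmxDl mul1mx -scalemxAr mul_delta_mx.
rewrite mulmxDr mulmx1 mulmxN mulmxDl -!scalemxAl !mul_delta_mx.
rewrite !scalerDr !scalerN opprD !addrA -!scalerDr -scalerBr -!scalerBr => conj_ij.
have := liftableD (liftableD conj_ij (liftable_delta c neq_ji)) (liftable_delta (- c) neq_ij).
rewrite scaleNr -scalerDr -scalerBr subrK.
by rewrite [delta_mx i j + _]addrC addrAC addrK.
Qed.

Lemma liftable_trace X : congr_mod p%:R (\tr X) 0 -> liftable X.
Proof.
have [n0 | n_gt0] := posnP n.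
  have -> : X = 0 by apply/matrixP => i; have := ltn_ord i; rewrite {2}n0.
  by move=> _; apply: liftable0.
pose i0 := Ordinal n_gt0; case=> t; rewrite subr0 => trX.
pose F (i j : 'I_n) := X i j *: (delta_mx i j - (i == j)%:R *: delta_mx i0 i0).
have defX : X - \tr X *: delta_mx i0 i0 = \sum_i \sum_j F i j.
  rewrite {1}(matrix_sum_delta X) /F /mxtrace scaler_suml -sumrB; apply: eq_bigr => i _.
  rewrite (bigD1 i) //= [in RHS](bigD1 i) //= eqxx scale1r addrAC scalerBr; congr (_ + _).
  by apply: eq_bigr => j neq_ji; rewrite eq_sym (negbTE neq_ji) scale0r subr0.
apply: (@liftable_congr (X - \tr X *: delta_mx i0 i0)).
  by exists (- (t *: delta_mx i0 i0)); rewrite addrAC subrr add0r trX scalerN scalerA.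
rewrite defX; apply: big_ind => [|Y Z|i _]; [exact: liftable0 | exact: liftableD |].
apply: big_ind => [|Y Z|j _]; [exact: liftable0 | exact: liftableD |].
rewrite /F; have [<- | neq_ij] := eqVneq i j; last first.
  by rewrite scale0r subr0; apply: liftable_delta.
rewrite scale1r; have [-> | neq_ii0] := eqVneq i i0.
  by rewrite subrr scaler0; apply: liftable0.
by apply: liftable_diag; rewrite eq_sym.
Qed.

End Liftable.

Section TorsionFree.
Variables (R : comPzRingType) (n p : nat).
Hypothesis p_lreg : GRing.lreg (p%:R : R).
Implicit Types (C X Y : 'M[R]_n).

Lemma ppow_scale_inj r X : ppow R p r *: X = 0 -> X = 0.
Proof.
move=> /matrixP pX0; apply/matrixP => i j; apply/eqP.
by have /eqP := pX0 i j; rewrite !mxE /ppow natrX (mulrI_eq0 _ (lregX p_lreg)).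
Qed.

Lemma congr_mx_ppow_cancel r X Y :
  congr_mx (ppow R p r.+1) (ppow R p r *: X) (ppow R p r *: Y) -> congr_mx p%:R X Y.
Proof.
case=> C defC; exists C; apply/eqP; rewrite -subr_eq0; apply/eqP/(@ppow_scale_inj r).
by rewrite !scalerBr defC ppowS scalerA subrr.
Qed.

Lemma trace_congr0_det1 r C : (0 < r)%N -> \det (1%:M + ppow R p r *: C) = 1 ->
  congr_mod p%:R (\tr C) 0.
Proof.
move=> r_gt0; have [z ->] := det_1addZ (ppow R p r) C => /eqP.
rewrite -addrA -subr_eq0 addrAC subrr add0r -mulrA -mulrDr /ppow natrX.
rewrite (mulrI_eq0 _ (lregX p_lreg)) addr_eq0 => /eqP ->.
by exists (- (p%:R ^+ r.-1 * z)); rewrite subr0 mulrN mulrA -exprS prednK.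
Qed.

End TorsionFree.

Definition L_to_gr (R : comPzRingType) (n p : nat) (X : nat -> 'M[R]_n) (r : nat) :
  'M[R]_n := epsilon (inhabits 1%:M) (fun A => sl_lift p r A (X r)).

Section LieIsomorphism.
Variables (R : comPzRingType) (n p : nat).
Implicit Types (X Y : nat -> 'M[R]_n) (a : nat -> 'M[R]_n).
Local Notation phi := (@L_to_gr R n p).

Lemma L_to_grP X r : (0 < r)%N -> congr_mod p%:R (\tr (X r)) 0 ->
  sl_lift p r (phi X r) (X r).
Proof.
move=> r_gt0 /(liftable_trace r_gt0) exA.
exact: (epsilon_spec _ (fun A => sl_lift p r A (X r)) exA).
Qed.

Lemma gr_elt_L_to_gr X : L_elt p X -> gr_elt p (phi X).
Proof.
move=> [_ [trX [N XN0]]]; split=> [r r_gt0 | ].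
  have [detA liftA] := L_to_grP r_gt0 (trX r).
  by split=> //; apply/congr_mxP/(lifts_congr1 liftA).
exists N.+1 => r lt_Nr; have r_gt0 : (0 < r)%N by apply: leq_trans lt_Nr.
have [detA liftA] := L_to_grP r_gt0 (trX r).
split=> //; apply/congr_mxP/(lifts_congr0 _ liftA)/congr_mxP.
by apply: XN0; apply: ltnW.
Qed.

Lemma L_to_gr_eq X Y : L_elt p X -> L_elt p Y -> L_eq p X Y -> gr_eq p (phi X) (phi Y).
Proof.
move=> [_ [trX _]] [_ [trY _]] XY r r_gt0.
have [detA liftA] := L_to_grP r_gt0 (trX r).
apply: (@sl_lift_in_Gamma _ _ _ _ _ _ (Y r)); last exact: L_to_grP r_gt0 (trY r).
by split=> //; apply: lifts_congr liftA; apply/congr_mxP/XY.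
Qed.

Lemma L_to_gr_add X Y : L_elt p X -> L_elt p Y ->
  gr_eq p (phi (L_add X Y)) (gr_add (phi X) (phi Y)).
Proof.
move=> [_ [trX _]] [_ [trY _]] r r_gt0.
have trXY : congr_mod p%:R (\tr (L_add X Y r)) 0.
  have [[s defs] [t deft]] := (trX r, trY r).
  by exists (s + t); rewrite /L_add mxtraceD mulrDr -defs -deft !subr0.
apply: sl_lift_in_Gamma (L_to_grP r_gt0 trXY) _.
by apply: sl_lift_mul; [| apply: L_to_grP r_gt0 (trX r) | apply: L_to_grP r_gt0 (trY r)].
Qed.

(* The t^0 and t^r terms of the degree-r component of [X, Y] vanish mod p,
   the remaining ones are the commutators of the lifts of X i and Y (r - i). *)
Lemma L_to_gr_bracket X Y : L_elt p X -> L_elt p Y ->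
  gr_eq p (phi (L_bracket X Y)) (gr_bracket (phi X) (phi Y)).
Proof.
move=> [X0 [trX _]] [Y0 [trY _]] r r_gt0.
have trXY : congr_mod p%:R (\tr (L_bracket X Y r)) 0.
  exists 0; rewrite mulr0 subr0 raddf_sum big1 // => i _.
  by rewrite /= mxtraceD linearN /= mxtrace_mulC subrr.
apply: sl_lift_in_Gamma (L_to_grP r_gt0 trXY) _.
have sl_lift_prod : sl_lift p r (gr_bracket (phi X) (phi Y) r)
    (\sum_(1 <= i < r) (X i *m Y (r - i)%N - Y (r - i)%N *m X i)).
  rewrite /gr_bracket big_seq [X in sl_lift _ _ _ X]big_seq.
  apply: big_ind2 => [|A U B V | i]; first by split; [apply: det1 | apply: lifts_1].
    exact: sl_lift_mul.
  rewrite mem_index_iota => /andP[i_gt0 lt_ir]; have ri_gt0 : (0 < r - i)%N by rewrite subn_gt0.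
  have := sl_lift_gcomm i_gt0 ri_gt0 (L_to_grP i_gt0 (trX i)) (L_to_grP ri_gt0 (trY _)).
  by rewrite subnKC // ltnW.
case: sl_lift_prod => detP liftP; split=> //; apply: lifts_congr liftP.
apply: congr_mx_sym; rewrite /L_bracket big_ltn // big_nat_recr //= subnn subn0 addrCA.
apply: congr_mx_addr0 (congr_mx_refl _ _); rewrite -[0]addr0.
move/congr_mxP: X0 => X0; move/congr_mxP: Y0 => Y0.
by apply: congr_mxD; [apply: (congr_mx_commutator0 _ X0).1 | apply: (congr_mx_commutator0 _ Y0).2].
Qed.

Hypothesis p_lreg : GRing.lreg (p%:R : R).

Lemma L_to_gr_inj X Y : L_elt p X -> L_elt p Y -> gr_eq p (phi X) (phi Y) -> L_eq p X Y.
Proof.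
move=> [/congr_mxP X0 [trX _]] [/congr_mxP Y0 [trY _]] eqXY [|r].
  exact/congr_mxP/(congr_mx_trans X0 (congr_mx_sym Y0)).
have [detA liftA] := L_to_grP (ltn0Sn r) (trX r.+1).
have [detB liftB] := L_to_grP (ltn0Sn r) (trY r.+1).
have /in_Gamma_adjmx AB := eqXY r.+1 (ltn0Sn r); have {}AB := AB detA detB.
have := congr_mx_trans (congr_mx_sym liftA) (congr_mx_trans AB liftB).
by move/congr_mx_addKl/(congr_mx_ppow_cancel p_lreg)/congr_mxP.
Qed.

Lemma L_to_gr_surj a : gr_elt p a -> exists X, L_elt p X /\ gr_eq p (phi X) a.
Proof.
move=> [aGamma [N aN]].
pose X r := if r is 0 then 0
            else epsilon (inhabits 0) (fun C : 'M[R]_n => a r = 1%:M + ppow R p r *: C).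
have defa r : (0 < r)%N -> a r = 1%:M + ppow R p r *: X r.
  case: r => // r _; apply: (epsilon_spec _ (fun C => a r.+1 = 1%:M + ppow R p r.+1 *: C)).
  have [C defC] := (congr_mxP _ _ _).1 (aGamma r.+1 isT).2.
  by exists C; rewrite -defC addrC subrK.
have trX r : congr_mod p%:R (\tr (X r)) 0.
  case: r => [|r]; first by exists 0; rewrite mxtrace0 subr0 mulr0.
  by apply: (trace_congr0_det1 p_lreg (ltn0Sn r)); rewrite -defa // (aGamma _ _).1.
exists X; split.
  split; first exact/congr_mxP/congr_mx_refl.
  split=> //; exists N.+1 => r lt_Nr; have r_gt0 : (0 < r)%N by apply: leq_trans lt_Nr.
  move: (aN r (ltnW lt_Nr)).2 => /congr_mxP.
  rewrite defa // -{2}[1%:M]addr0 => /congr_mx_addKl aN1.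
  by apply/congr_mxP/(congr_mx_ppow_cancel p_lreg (r := r)); rewrite scaler0.
move=> r r_gt0; apply: sl_lift_in_Gamma (L_to_grP r_gt0 (trX r)) _.
by split; [apply: (aGamma r r_gt0).1 | rewrite /lifts {1}(defa r r_gt0); apply: congr_mx_refl].
Qed.

End LieIsomorphism.

Theorem theorem2p4 (R : comPzRingType) (I : eqType) (v : I -> R) (n p : nat) :
  Z_basis v -> (2 <= n)%N -> prime p ->
  exists phi : (nat -> 'M[R]_n) -> (nat -> 'M[R]_n), Lie_iso_L_gr p phi.
Proof.
move=> basis_v _ p_prime.
have p_lreg := Z_basis_natr_lreg basis_v (prime_gt0 p_prime).
exists (@L_to_gr R n p); split; first exact: gr_elt_L_to_gr.
split; first exact: L_to_gr_eq.
split; first exact: L_to_gr_add.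
split; first exact: L_to_gr_bracket.
by split; [exact: L_to_gr_inj | exact: L_to_gr_surj].
Qed.
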